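(* For all integers $m,n\ge 1$, the lexicographic product $K_{4m}\circ\overline{K_{2n+1}}$ (an odd-regular graph on $4m(2n+1)$ vertices) is orientable $\mathbb{Z}_{4m(2n+1)}$-distance magic.
   Context: For graphs $G,H$, the lexicographic product $G\circ H$ has vertex set $V(G)\times V(H)$, with $(g,h)$ adjacent to $(g',h')$ iff $g$ is adjacent to $g'$ in $G$, or $g=g'$ and $h$ is adjacent to $h'$ in $H$. $\overline{K_n}$ denotes the edgeless graph on $n$ vertices. For an oriented graph $\vec G$ and a vertex $x$, $N^+(x)$ is the set of vertices $y$ with an arc from $x$ to $y$, and $N^-(x)$ is the set of vertices $y$ with an arc from $y$ to $x$. For an Abelian group $\Gamma$ of order $n$, a directed $\Gamma$-distance magic labeling of an oriented graph $\vec G$ of order $n$ is a bijection $\vec l:V\to\Gamma$ such that there is $\mu\in\Gamma$ with $\sum_{y\in N^+(x)}\vec l(y)-\sum_{y\in N^-(x)}\vec l(y)=\mu$ for every vertex $x$. A simple graph $G$ of order $n$ is orientable $\Gamma$-distance magic if some orientation of its edges admits a directed $\Gamma$-distance magic labeling. $\mathbb{Z}_n$ is the cyclic group of integers modulo $n$. *)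

From HB Require Import structures.
From mathcomp Require Import all_boot all_order all_algebra.
Set Implicit Arguments. Unset Strict Implicit. Unset Printing Implicit Defensive.
Import GRing.Theory.
Local Open Scope ring_scope.

(* Simple graphs are symmetric irreflexive relations on a finite vertex type. *)

Definition complete_graph (k : nat) : rel 'I_k := fun i j => i != j.

(* Edgeless graph (complement of K_k) on vertex set 'I_k. *)
Definition edgeless_graph (k : nat) : rel 'I_k := fun _ _ => false.

Definition lexprod (T1 T2 : finType) (e1 : rel T1) (e2 : rel T2) : rel (T1 * T2) :=
  fun x y => e1 x.1 y.1 || ((x.1 == y.1) && e2 x.2 y.2).

(* a : rel T (arc relation: a x y means an arc x -> y) is an orientation of
   the simple graph e: every edge gets exactly one direction, and arcs only
   along edges. *)
Definition is_orientation (T : finType) (e a : rel T) : Prop :=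
  forall x y, e x y = (a x y || a y x) /\ ~~ (a x y && a y x).

Definition directed_distance_magic (T : finType) (Gamma : zmodType)
    (a : rel T) (l : T -> Gamma) : Prop :=
  bijective l /\
  exists mu : Gamma, forall x : T,
    \sum_(y | a x y) l y - \sum_(y | a y x) l y = mu.

Definition orientable_distance_magic (Gamma : zmodType) (T : finType)
    (e : rel T) : Prop :=
  exists a : rel T, is_orientation e a /\
  exists l : T -> Gamma, directed_distance_magic a l.

Arguments complete_graph k : clear implicits.
Arguments edgeless_graph k : clear implicits.
Arguments orientable_distance_magic Gamma {T} e.

From mathcomp Require Import all_boot all_order all_algebra.
From mathcomp Require Import zify.
Import GRing.Theory.

Set Implicit Arguments.
Unset Strict Implicit.
Unset Printing Implicit Defensive.

(* Write N = 4m(2n+1) and view a vertex as a pair (i, j) of a class i < 4m of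
   K_4m and a position j < 2n+1. Label (i, j) by pi_j(i) + 4mj, where the pi_j
   are permutations of [0, 4m) fixing 0 such that sum_j pi_j(i) = 2m(2n+1) for
   every i <> 0. In Z_N every class i <> 0 then has label sum h = N/2 and the
   class 0 has label sum 0.
   Orient every edge from the lower to the higher class. As h = -h, a class
   joined to x only by out-arcs or only by in-arcs contributes its label sum to
   the weight of x, whatever the direction; so x gets (4m-2)h = 0 outside
   class 0 but (4m-1)h = h inside class 0. Reversing the arcs between class 0
   and the vertex astar labelled N/4, which is not in class 0, repairs this: for
   x in class 0 the class of astar now contributes h - 2(N/4) = 0, while the
   weight of astar is unchanged since class 0 has label sum 0. All weights are
   then 0. *)

Section ClassOrientation.

Variables (M t : nat) (astar : 'I_M * 'I_t) (i0 : 'I_M).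

(* Arcs go from the lower to the higher class, except that the arcs between
   [astar] and the class [i0] are reversed. *)
Definition class_orient : rel ('I_M * 'I_t) := fun x y =>
  (x.1 != y.1) && ((x.1 < y.1) (+)
    (((x == astar) && (y.1 == i0)) (+) ((y == astar) && (x.1 == i0)))).

Lemma class_orient_is_orientation :
  is_orientation (lexprod (complete_graph M) (edgeless_graph t)) class_orient.
Proof.
move=> x y; rewrite /lexprod /complete_graph /edgeless_graph /class_orient andbF orbF.
case: (eqVneq x.1 y.1) => [//|ne] /=.
have -> : (y.1 < x.1) = ~~ (x.1 < y.1).
  by case: ltngtP => // /val_inj eq_xy; rewrite eq_xy eqxx in ne.
rewrite (addbC ((y == astar) && _)).
set b := (_ && _) (+) _.
by case: (x.1 < y.1); case: b.
Qed.

Lemma class_orient_antisym x y : x.1 != y.1 -> class_orient y x = ~~ class_orient x y.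
Proof.
move=> ne; have [] := class_orient_is_orientation x y.
rewrite /lexprod /complete_graph /edgeless_graph ne /=.
by case: (class_orient x y); case: (class_orient y x).
Qed.

Lemma class_orient_row x (i : 'I_M) j : x.1 != i ->
  class_orient x (i, j) = ((x.1 < i) (+) ((x == astar) && (i == i0)))
                          (+) (((x.1 == i0) && (i == astar.1)) && (j == astar.2)).
Proof.
move=> ne; rewrite /class_orient /= ne -addbA; congr (_ (+) (_ (+) _)).
by case: astar => a1 a2; rewrite xpair_eqE andbC andbA.
Qed.

End ClassOrientation.

Local Open Scope ring_scope.

Lemma mulrn_self_inverse (G : zmodType) (h : G) k : h + h = 0 -> h *+ k = h *+ odd k.
Proof.
move=> hh; rewrite -[in LHS](odd_double_half k) mulrnDr -mul2n mulrnA mulr2n hh.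
by rewrite mul0rn addr0.
Qed.

Lemma oppr_self_inverse (G : zmodType) (x : G) : x + x = 0 -> - x = x.
Proof. by move/eqP; rewrite addr_eq0 eq_sym => /eqP. Qed.

Lemma sumr_xor_pred1 (G : zmodType) t (r : 'I_t -> G) (b c : bool) j0 :
  let s := \sum_j r j - (r j0 + r j0) *+ c in
  \sum_(j | b (+) (c && (j == j0))) r j - \sum_(j | ~~ (b (+) (c && (j == j0)))) r j
  = if b then s else - s.
Proof.
have sum_j0 : \sum_j r j - r j0 = \sum_(j | j != j0) r j.
  by rewrite (bigD1 j0) //= addrC addrK.
rewrite /=; case: b; case: c => /=; rewrite ?big_pred0_eq ?subr0 ?sub0r ?mulr0n //.
- rewrite [X in _ - X](big_pred1 j0) => [|j]; last by rewrite /= negbK.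
  by rewrite mulr1n opprD addrA sum_j0.
- by rewrite big_pred1_eq mulr1n -sum_j0 !opprB addrA.
Qed.

Section ClassOrientationMagic.

Variables (M t : nat) (G : zmodType) (l : 'I_M * 'I_t -> G).
Variables (astar : 'I_M * 'I_t) (i0 : 'I_M) (h : G).
Hypotheses (h_self_inverse : h + h = 0) (astar_half : l astar + l astar = h).
Hypotheses (astar_row : astar.1 != i0) (M_even : ~~ odd M).

Let row i := \sum_j l (i, j).
Hypotheses (row_i0 : row i0 = 0) (row_h : forall i, i != i0 -> row i = h).

Let o := class_orient astar i0.

Lemma row_self_inverse i : row i + row i = 0.
Proof. by case: (eqVneq i i0) => [->|/row_h ->]; rewrite ?row_i0 ?addr0. Qed.

Lemma sum_rows : \sum_i row i = h.
Proof.
rewrite (bigD1 i0) //= row_i0 add0r (eq_bigr (fun=> h)) => [|i /row_h //].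
have M_gt0 : (0 < M)%N := leq_ltn_trans (leq0n _) (ltn_ord i0).
have odd_pred : odd M.-1 by move: M_even; rewrite -(prednK M_gt0) /= negbK.
by rewrite sumr_const cardC1 card_ord mulrn_self_inverse // odd_pred.
Qed.

Lemma class_orient_row_diff x i : i != x.1 ->
  \sum_(j | o x (i, j)) l (i, j) - \sum_(j | o (i, j) x) l (i, j)
  = row i - h *+ ((x.1 == i0) && (i == astar.1)).
Proof.
rewrite eq_sym => ne.
rewrite [X in _ - X](eq_bigl (fun j => ~~ o x (i, j))); last first.
  by move=> j; rewrite /o class_orient_antisym.
set b := (x.1 < i)%N (+) ((x == astar) && (i == i0)).
set c := (x.1 == i0) && (i == astar.1).
have rowE j : o x (i, j) = b (+) (c && (j == astar.2)) by rewrite /o class_orient_row.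
rewrite (eq_bigl _ _ rowE) (eq_bigl _ _ (fun j => congr1 negb (rowE j))).
have double : (l (i, astar.2) + l (i, astar.2)) *+ c = h *+ c.
  rewrite /c; case: (i =P astar.1) => [->|]; rewrite ?andbF //.
  by rewrite -surjective_pairing astar_half.
rewrite sumr_xor_pred1 double -/(row i); case: ifP => _ //.
apply: oppr_self_inverse.
by rewrite addrACA row_self_inverse add0r -opprD -mulrnDl h_self_inverse mul0rn oppr0.
Qed.

Lemma sum_by_rows (P : pred ('I_M * 'I_t)) :
  \sum_(y | P y) l y = \sum_i \sum_(j | P (i, j)) l (i, j).
Proof. by rewrite pair_big_dep; apply: eq_big => -[i j]. Qed.

Lemma class_orient_magic x : \sum_(y | o x y) l y - \sum_(y | o y x) l y = 0.
Proof.
have own_row :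
    \sum_(j | o x (x.1, j)) l (x.1, j) - \sum_(j | o (x.1, j) x) l (x.1, j) = 0.
  by rewrite !big_pred0 ?subrr // => j; rewrite /o /class_orient eqxx.
rewrite !sum_by_rows -sumrB (bigD1 x.1) //= own_row add0r.
rewrite (eq_bigr _ (fun i => @class_orient_row_diff x i)) sumrB.
have -> : \sum_(i | i != x.1) row i = h - row x.1.
  by rewrite -sum_rows [in RHS](bigD1 x.1) //= [row x.1 + _]addrC addrK.
case: (eqVneq x.1 i0) => [x_i0|x_ni0]; last first.
  by rewrite row_h // subrr big1 ?subr0 // => i _; rewrite (negbTE x_ni0).
rewrite x_i0 row_i0 subr0 (bigD1 astar.1) ?astar_row //= eqxx big1 ?addr0 ?subrr //.
by move=> i /andP[_ /negbTE ->].
Qed.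

End ClassOrientationMagic.

Lemma natr_Zp_inj p a b :
  (1 < p)%N -> (a < p)%N -> (b < p)%N -> a%:R = b%:R :> 'Z_p -> a = b.
Proof.
by move=> p_gt1 a_lt b_lt /(congr1 val); rewrite /= !val_Zp_nat // !modn_small.
Qed.

Lemma natr_Zp_mul_eq0 p k : (1 < p)%N -> (p * k)%:R = 0 :> 'Z_p.
Proof. by move=> p_gt1; rewrite natrM pchar_Zp // mul0r. Qed.

Local Close Scope ring_scope.

Section Labeling.

Variables m n : nat.

(* [layer_perm j] is pi_j; for i <> 0 the values at j = 0, 1, 2 add up to 6m
   and those at j = 2k+3, 2k+4 to 4m. *)
Definition layer_perm (j i : nat) : nat :=
  if i == 0 then 0 else
  match j with
  | 0 => i
  | 1 => if i <= 2 * m then i + 2 * m - 1 else i - 2 * m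
  | 2 => if i <= 2 * m then 4 * m + 1 - 2 * i else 8 * m - 2 * i
  | _ => if odd j then i else 4 * m - i
  end.

Lemma layer_perm0 j : layer_perm j 0 = 0.
Proof. by []. Qed.

Lemma layer_perm_lt j i : i < 4 * m -> layer_perm j i < 4 * m.
Proof. by rewrite /layer_perm; case: j => [|[|[|j]]]; repeat case: ifP; lia. Qed.

Lemma layer_perm_inj j : {in gtn (4 * m) &, injective (layer_perm j)}.
Proof.
move=> i i'; rewrite !unfold_in /layer_perm.
by case: j => [|[|[|j]]]; repeat case: ifP => /= /eqP ?; lia.
Qed.

Lemma layer_perm_first3 i : 0 < i < 4 * m ->
  layer_perm 0 i + layer_perm 1 i + layer_perm 2 i = 6 * m.
Proof. by rewrite /layer_perm; repeat case: ifP; lia. Qed.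

Lemma layer_perm_pair j i : ~~ odd j -> 0 < i < 4 * m ->
  layer_perm j.+3 i + layer_perm j.+4 i = 4 * m.
Proof. by rewrite /layer_perm /= => /negbTE -> /=; case: ifP; lia. Qed.

Lemma layer_perm_sum i : 0 < n -> 0 < i < 4 * m ->
  \sum_(j < 2 * n + 1) layer_perm j i = 2 * m * (2 * n + 1).
Proof.
move=> n_gt0 i_range; rewrite -(big_mkord xpredT (fun j => layer_perm j i)).
have -> : 2 * n + 1 = (2 * n.-1).+3 by lia.
elim: n.-1 => [|k IH].
  by rewrite !big_nat_recr //= big_geq // add0n muln0 layer_perm_first3 //; lia.
rewrite (_ : (2 * k.+1).+3 = (2 * k).+3.+2); last by lia.
rewrite big_nat_recr // big_nat_recr //= IH -addnA layer_perm_pair //; lia.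
Qed.

Local Notation N := (4 * m * (2 * n + 1)).

Definition label_value (x : 'I_(4 * m) * 'I_(2 * n + 1)) : nat :=
  layer_perm x.2 x.1 + 4 * m * x.2.

Definition magic_label x : 'Z_N := (label_value x)%:R%R.

Lemma label_value_lt x : label_value x < N.
Proof.
have := layer_perm_lt x.2 (ltn_ord x.1); have := ltn_ord x.2.
by rewrite /label_value; nia.
Qed.

Lemma label_value_inj : injective label_value.
Proof.
move=> [i j] [i' j'] /= eq_val.
have eq_j : j = j' :> nat.
  move: eq_val; have := layer_perm_lt j (ltn_ord i).
  have := layer_perm_lt j' (ltn_ord i').
  rewrite /label_value /=; nia.
move: eq_val; rewrite /label_value /= eq_j => /addIn eq_perm.
by rewrite (val_inj eq_j) (val_inj (layer_perm_inj (ltn_ord i) (ltn_ord i') eq_perm)).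
Qed.

Hypothesis m_gt0 : 0 < m.

Let N_gt1 : 1 < N. Proof. lia. Qed.

Lemma magic_label_bij : bijective magic_label.
Proof.
apply: inj_card_bij => [x y /natr_Zp_inj eq_val|].
  exact/label_value_inj/eq_val/label_value_lt/label_value_lt.
by rewrite card_prod !card_ord -[_ < _]/((Zp_trunc N).+2 <= N) Zp_cast.
Qed.

Lemma sum_magic_label_row i :
  (\sum_j magic_label (i, j) = (\sum_(j < 2 * n + 1) layer_perm j i + N * n)%:R)%R.
Proof.
have gauss : \sum_(j < 2 * n + 1) (j : nat) = n * (2 * n + 1).
  rewrite -(big_mkord xpredT (fun j => j)) bin2_sum bin2odd; last by rewrite oddD oddM.
  by rewrite addn1 /= mul2n doubleK mulnC.
rewrite /magic_label /= -natr_sum big_split /= -big_distrr /= gauss.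
by congr (_ + _)%:R%R; lia.
Qed.

Lemma magic_label_row0 (i : 'I_(4 * m)) :
  i = 0 :> nat -> (\sum_j magic_label (i, j) = 0)%R.
Proof.
move=> i_eq0; rewrite sum_magic_label_row big1 ?add0n ?natr_Zp_mul_eq0 // => j _.
by rewrite i_eq0 layer_perm0.
Qed.

Lemma magic_label_row (i : 'I_(4 * m)) : 0 < n -> i != 0 :> nat ->
  (\sum_j magic_label (i, j) = (2 * m * (2 * n + 1))%:R)%R.
Proof.
move=> n_gt0 i_neq0; rewrite sum_magic_label_row layer_perm_sum //; last first.
  by rewrite lt0n i_neq0 ltn_ord.
by rewrite natrD natr_Zp_mul_eq0 // addr0.
Qed.

Lemma magic_label_quarter_row x :
  magic_label x = (m * (2 * n + 1))%:R%R -> x.1 != 0 :> nat.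
Proof.
move=> label_x; apply/eqP => x1_eq0; move: label_x.
rewrite /magic_label /label_value x1_eq0 layer_perm0 add0n.
move: (nat_of_ord x.2) (ltn_ord x.2) => k k_lt /natr_Zp_inj eq_lab.
have : m * (4 * k) = m * (2 * n + 1) by rewrite mulnA [m * 4]mulnC; apply: eq_lab; nia.
by move/eqP; rewrite eqn_pmul2l // => /eqP; lia.
Qed.

End Labeling.

Theorem mainTheorem2 (m n : nat) (hm : (1 <= m)%N) (hn : (1 <= n)%N) :
  orientable_distance_magic 'Z_(4 * m * (2 * n + 1))
    (lexprod (complete_graph (4 * m)) (edgeless_graph (2 * n + 1))).
Proof.
have [g _ gK] := magic_label_bij n hm.
pose astar := g (m * (2 * n + 1))%:R%R.
have astar_label : magic_label astar = (m * (2 * n + 1))%:R%R := gK _.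
have M_gt0 : (0 < 4 * m)%N by rewrite muln_gt0.
pose i0 : 'I_(4 * m) := Ordinal M_gt0.
exists (class_orient astar i0); split; first exact: class_orient_is_orientation.
exists (@magic_label m n); split; first exact: magic_label_bij.
exists 0%R; apply: (class_orient_magic (h := (2 * m * (2 * n + 1))%:R%R)).
- by rewrite -natrD (_ : 2 * m * _ + _ = 4 * m * (2 * n + 1) * 1)
       ?natr_Zp_mul_eq0 //; nia.
- by rewrite astar_label -natrD; congr (_%:R)%R; nia.
- by apply: contra (magic_label_quarter_row hm astar_label) => /eqP ->.
- by rewrite oddM.
- exact: magic_label_row0.
- by move=> i; apply: magic_label_row.
Qed.
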